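(* Let $b_1,b_2,b_3\in\mathbb{R}$ with $b_1b_2b_3\neq0$ and consider the system $$\dot x_1=b_1x_2,\qquad \dot x_2=b_2x_1x_3,\qquad \dot x_3=b_3x_1x_2 .$$ Let $m\in\mathbb{R}\setminus\{0\}$ with $mb_1b_2<0$. Then the equilibrium state $e_3^m=(0,0,m)$ is nonlinear stable.
   Context: Nonlinear stable means stable in the sense of Lyapunov: for every neighbourhood $U$ of the equilibrium there is a neighbourhood $V$ such that every trajectory starting in $V$ remains in $U$ for all $t\ge0$. *)

From Stdlib Require Import Reals.
From Coquelicot Require Import Coquelicot.
Open Scope R_scope.

Definition pt (x1 x2 x3 : R) : R * R * R := (x1, x2, x3).

Definition is_solution (b1 b2 b3 a c : R) (x1 x2 x3 : R -> R) : Prop :=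
  forall t, a < t < c ->
    is_derive x1 t (b1 * x2 t) /\
    is_derive x2 t (b2 * x1 t * x3 t) /\
    is_derive x3 t (b3 * x1 t * x2 t).

Definition nonlinear_stable (b1 b2 b3 : R) (e : R * R * R) : Prop :=
  forall U : R * R * R -> Prop, locally e U ->
    exists V : R * R * R -> Prop, locally e V /\
      forall (a c : R) (x1 x2 x3 : R -> R),
        a < 0 < c -> is_solution b1 b2 b3 a c x1 x2 x3 ->
        V (pt (x1 0) (x2 0) (x3 0)) ->
        forall t, 0 <= t < c -> U (pt (x1 t) (x2 t) (x3 t)).

From Stdlib Require Import Reals Ranalysis5 Lra Psatz.
From Coquelicot Require Import Coquelicot.
Open Scope R_scope.

(* With u = x3 - m, both C = 2 b1 u - b3 x1^2 and
   H = x2^2 + kappa x1^2 - (b2/b3) u^2 are constants of motion, where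
   kappa = - b2 m / b1 is positive exactly because m b1 b2 < 0.  The
   energy-Casimir function H + lambda C^2 is bounded below by a multiple of
   the squared distance to (0,0,m) as long as x1^2 stays small (there the
   quartic x1^4 terms are dominated), and above by a multiple of it near the
   equilibrium.  Starting close enough, the conserved value is too small for
   the trajectory ever to reach the boundary of a small ball, so by continuity
   it never leaves it. *)

Lemma is_derive_sq (f : R -> R) (t d : R) :
  is_derive f t d -> is_derive (fun s => f s ^ 2) t (2 * f t * d).
Proof.
  intros Hf. replace (2 * f t * d) with (INR 2 * d * f t ^ Nat.pred 2) by (simpl; ring).
  now apply is_derive_pow.
Qed.

Lemma is_derive_sub_const (f : R -> R) (t d c : R) :
  is_derive f t d -> is_derive (fun s => f s - c) t d.
Proof.
  intros Hf. replace d with (d - 0) by ring.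
  apply (is_derive_minus f (fun _ => c)); [exact Hf |].
  exact (@is_derive_const R_AbsRing R_NormedModule c t).
Qed.

Lemma is_derive_continuity_pt (f : R -> R) (t d : R) :
  is_derive f t d -> continuity_pt f t.
Proof.
  intros Hf. apply continuity_pt_filterlim.
  apply (@ex_derive_continuous R_AbsRing R_NormedModule). now exists d.
Qed.

Lemma derive_zero_const_on (a c : R) (f : R -> R) :
  a < 0 -> (forall t, a < t < c -> is_derive f t 0) ->
  forall t, 0 <= t < c -> f t = f 0.
Proof.
  intros Ha Hd t [[Ht | <-] Htc]; [| reflexivity].
  destruct (MVT_gen f 0 t (fun _ => 0)) as [z [_ Hz]].
  - rewrite Rmin_left, Rmax_right by lra. intros s Hs; apply Hd; lra.
  - rewrite Rmin_left, Rmax_right by lra.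
    intros s Hs; apply (is_derive_continuity_pt _ _ 0), Hd; lra.
  - lra.
Qed.

Lemma continuous_stays_below (g : R -> R) (t r : R) :
  0 <= t -> (forall s, 0 <= s <= t -> continuity_pt g s) ->
  g 0 < r -> (forall s, 0 <= s <= t -> g s <> r) -> g t < r.
Proof.
  intros Ht Hc H0 Hneq.
  destruct (Rlt_or_le (g t) r) as [Hlt | [Hgt | Heq]]; [exact Hlt | exfalso | ].
  - destruct Ht as [Ht | <-]; [| lra].
    destruct (IVT_interv (fun s => g s - r) 0 t) as [s [Hs Hgs]]; try lra.
    + intros s Hs. apply continuity_pt_minus; [now apply Hc | apply continuity_pt_const].
      now intros ? ?.
    + apply (Hneq s Hs); lra.
  - exfalso; apply (Hneq t); [lra | now symmetry].
Qed.

Section CasimirEnergy.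

Variables b1 b2 b3 m : R.
Hypotheses (Hb1 : b1 <> 0) (Hb3 : b3 <> 0) (Hmb : m * b1 * b2 < 0).

Definition kappa := - (b2 * m) / b1.
(* 2 lambda b1^2 = 1 + |b2/b3|: then lambda C^2 dominates the term -(b2/b3) u^2 of H. *)
Definition lambda := (1 + Rabs (b2 / b3)) / (2 * b1 ^ 2).

Definition casimir (x1 x3 : R) := 2 * b1 * (x3 - m) - b3 * x1 ^ 2.
Definition energy (x1 x2 x3 : R) := x2 ^ 2 + kappa * x1 ^ 2 - b2 / b3 * (x3 - m) ^ 2.
Definition lyap (x1 x2 x3 : R) := energy x1 x2 x3 + lambda * casimir x1 x3 ^ 2.
Definition dist2 (x1 x2 x3 : R) := x1 ^ 2 + x2 ^ 2 + (x3 - m) ^ 2.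

Lemma kappa_pos : 0 < kappa.
Proof.
  unfold kappa. replace (- (b2 * m) / b1) with (- (m * b1 * b2) / b1 ^ 2) by (field; exact Hb1).
  apply Rdiv_lt_0_compat; [lra | now apply pow2_gt_0].
Qed.

Lemma lambda_pos : 0 < lambda.
Proof.
  unfold lambda. apply Rdiv_lt_0_compat; [pose proof (Rabs_pos (b2 / b3)); lra |].
  pose proof (pow2_gt_0 b1 Hb1); lra.
Qed.

Definition lyap_bound := 1 + kappa + Rabs (b2 / b3) + 8 * lambda * b1 ^ 2 + 2 * lambda * b3 ^ 2.

Definition coercivity := Rmin 1 (kappa / 2).
Definition coercivity_radius := kappa / (2 * lambda * b3 ^ 2).

Lemma coercivity_pos : 0 < coercivity.
Proof. pose proof kappa_pos. apply Rmin_pos; lra. Qed.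

Lemma coercivity_radius_pos : 0 < coercivity_radius.
Proof.
  pose proof kappa_pos. pose proof lambda_pos. pose proof (pow2_gt_0 b3 Hb3).
  apply Rdiv_lt_0_compat; nra.
Qed.

Lemma lyap_lower_bound x1 x2 x3 : x1 ^ 2 <= coercivity_radius ->
  coercivity * dist2 x1 x2 x3 <= lyap x1 x2 x3.
Proof.
  intros Hx1. pose proof kappa_pos as Hk. pose proof lambda_pos as Hl.
  pose proof (pow2_gt_0 b3 Hb3) as Hb3sq.
  unfold coercivity_radius, coercivity, lyap, energy, casimir, dist2 in *.
  set (y := x1 ^ 2) in *. set (u := x3 - m). set (beta := b2 / b3).
  assert (Hy : 0 <= y) by apply pow2_ge_0.
  assert (Hcas : 2 * b1 ^ 2 * u ^ 2 - b3 ^ 2 * y ^ 2 <= (2 * b1 * u - b3 * y) ^ 2)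
    by (pose proof (pow2_ge_0 (b1 * u - b3 * y)); nra).
  assert (Hlb : lambda * (2 * b1 ^ 2) = 1 + Rabs beta)
    by (unfold lambda, beta; field; exact Hb1).
  assert (Hquart : lambda * b3 ^ 2 * y ^ 2 <= kappa / 2 * y).
  { assert (lambda * b3 ^ 2 * y <= kappa / 2).
    { apply (Rmult_le_compat_l (2 * lambda * b3 ^ 2)) in Hx1; [| nra].
      replace (2 * lambda * b3 ^ 2 * (kappa / (2 * lambda * b3 ^ 2))) with kappa in Hx1
        by (field; lra).
      lra. }
    nra. }
  assert (Hlower : x2 ^ 2 + kappa / 2 * y + u ^ 2
                   <= x2 ^ 2 + kappa * y - beta * u ^ 2 + lambda * (2 * b1 * u - b3 * y) ^ 2).
  { pose proof (Rle_abs beta). pose proof (pow2_ge_0 u).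
    apply (Rmult_le_compat_l lambda) in Hcas; nra. }
  pose proof (Rmin_l 1 (kappa / 2)). pose proof (Rmin_r 1 (kappa / 2)).
  pose proof (pow2_ge_0 x2). pose proof (pow2_ge_0 u).
  nra.
Qed.

Lemma lyap_upper_bound x1 x2 x3 : dist2 x1 x2 x3 <= 1 ->
  lyap x1 x2 x3 <= lyap_bound * dist2 x1 x2 x3.
Proof.
  intros Hd. pose proof kappa_pos as Hk. pose proof lambda_pos as Hl.
  unfold lyap, energy, casimir, dist2, lyap_bound in *.
  set (y := x1 ^ 2) in *. set (u := x3 - m) in *. set (beta := b2 / b3) in *.
  assert (Hy : 0 <= y) by apply pow2_ge_0.
  pose proof (pow2_ge_0 x2). pose proof (pow2_ge_0 u).
  assert (Hyy : y ^ 2 <= y) by nra.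
  assert (Hcas : (2 * b1 * u - b3 * y) ^ 2 <= 8 * b1 ^ 2 * u ^ 2 + 2 * b3 ^ 2 * y)
    by (pose proof (pow2_ge_0 (2 * b1 * u + b3 * y));
        pose proof (Rmult_le_compat_l (b3 ^ 2) _ _ (pow2_ge_0 b3) Hyy); nra).
  assert (Hbeta : - beta * u ^ 2 <= Rabs beta * u ^ 2).
  { pose proof (Rle_abs (- beta)). rewrite Rabs_Ropp in *. nra. }
  pose proof (Rabs_pos beta). pose proof (pow2_ge_0 b1). pose proof (pow2_ge_0 b3).
  apply (Rmult_le_compat_l lambda) in Hcas; [| lra].
  set (K := 1 + kappa + Rabs beta + 8 * lambda * b1 ^ 2 + 2 * lambda * b3 ^ 2).
  assert (0 <= (K - 1) * x2 ^ 2) by (apply Rmult_le_pos; unfold K; nra).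
  assert (0 <= (K - kappa - 2 * lambda * b3 ^ 2) * y) by (apply Rmult_le_pos; unfold K; nra).
  assert (0 <= (K - Rabs beta - 8 * lambda * b1 ^ 2) * u ^ 2)
    by (apply Rmult_le_pos; unfold K; nra).
  nra.
Qed.

Lemma ball_dist2 e y1 y2 y3 :
  ball (pt 0 0 m) e (pt y1 y2 y3) -> dist2 y1 y2 y3 < 3 * e ^ 2.
Proof.
  intros [[H1 H2] H3]. change (Rabs (y1 - 0) < e) in H1.
  change (Rabs (y2 - 0) < e) in H2. change (Rabs (y3 - m) < e) in H3.
  apply Rabs_def2 in H1, H2, H3. unfold dist2. nra.
Qed.

Lemma dist2_ball e y1 y2 y3 : 0 < e ->
  dist2 y1 y2 y3 < e ^ 2 -> ball (pt 0 0 m) e (pt y1 y2 y3).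
Proof.
  unfold dist2. intros He Hd.
  pose proof (pow2_ge_0 y1). pose proof (pow2_ge_0 y2). pose proof (pow2_ge_0 (y3 - m)).
  split; [split |]; cbn; unfold AbsRing_ball, abs, minus, plus, opp; cbn;
    apply Rabs_def1; nra.
Qed.

Section Trajectory.

Variables (a c : R) (x1 x2 x3 : R -> R).
Hypotheses (Ha : a < 0) (Hsol : is_solution b1 b2 b3 a c x1 x2 x3).

Lemma casimir_conserved t : 0 <= t < c ->
  casimir (x1 t) (x3 t) = casimir (x1 0) (x3 0).
Proof.
  apply (derive_zero_const_on a c (fun s => casimir (x1 s) (x3 s)) Ha).
  intros s Hs. destruct (Hsol s Hs) as [d1 [_ d3]].
  replace 0 with (2 * b1 * (b3 * x1 s * x2 s) - b3 * (2 * x1 s * (b1 * x2 s))) by ring.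
  apply (is_derive_minus (fun s => 2 * b1 * (x3 s - m)) (fun s => b3 * x1 s ^ 2));
    apply is_derive_scal; [| now apply is_derive_sq].
  now apply is_derive_sub_const.
Qed.

Lemma energy_conserved t : 0 <= t < c ->
  energy (x1 t) (x2 t) (x3 t) = energy (x1 0) (x2 0) (x3 0).
Proof.
  apply (derive_zero_const_on a c (fun s => energy (x1 s) (x2 s) (x3 s)) Ha).
  intros s Hs. destruct (Hsol s Hs) as [d1 [d2 d3]].
  (* the derivative is 2 x1 x2 (kappa b1 + b2 m), which is how kappa is chosen *)
  replace 0 with (2 * x2 s * (b2 * x1 s * x3 s) + kappa * (2 * x1 s * (b1 * x2 s))
                  - b2 / b3 * (2 * (x3 s - m) * (b3 * x1 s * x2 s)))
    by (unfold kappa; field; auto).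
  apply (is_derive_minus (fun s => x2 s ^ 2 + kappa * x1 s ^ 2)
                         (fun s => b2 / b3 * (x3 s - m) ^ 2)).
  - apply (is_derive_plus (fun s => x2 s ^ 2) (fun s => kappa * x1 s ^ 2));
      [| apply is_derive_scal]; now apply is_derive_sq.
  - apply is_derive_scal, (is_derive_sq (fun s => x3 s - m)).
    now apply is_derive_sub_const.
Qed.

Lemma lyap_conserved t : 0 <= t < c ->
  lyap (x1 t) (x2 t) (x3 t) = lyap (x1 0) (x2 0) (x3 0).
Proof.
  intros Ht. unfold lyap. now rewrite energy_conserved, casimir_conserved.
Qed.

Lemma dist2_continuity_pt t : a < t < c ->
  continuity_pt (fun s => dist2 (x1 s) (x2 s) (x3 s)) t.
Proof.
  intros Ht. destruct (Hsol t Ht) as [d1 [d2 d3]].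
  apply (is_derive_continuity_pt _ _
           (2 * x1 t * (b1 * x2 t) + 2 * x2 t * (b2 * x1 t * x3 t)
            + 2 * (x3 t - m) * (b3 * x1 t * x2 t))).
  apply (is_derive_plus (fun s => x1 s ^ 2 + x2 s ^ 2) (fun s => (x3 s - m) ^ 2)).
  - apply (is_derive_plus (fun s => x1 s ^ 2) (fun s => x2 s ^ 2)); now apply is_derive_sq.
  - apply (is_derive_sq (fun s => x3 s - m)).
    now apply is_derive_sub_const.
Qed.


Lemma dist2_stays_below r t : 0 <= t < c -> r <= coercivity_radius ->
  dist2 (x1 0) (x2 0) (x3 0) < r -> lyap (x1 0) (x2 0) (x3 0) < coercivity * r ->
  dist2 (x1 t) (x2 t) (x3 t) < r.
Proof.
  intros [Ht0 Htc] Hr Hd0 Hl0.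
  apply (continuous_stays_below (fun s => dist2 (x1 s) (x2 s) (x3 s))); [lra | | exact Hd0 |].
  - intros s Hs. apply dist2_continuity_pt; lra.
  - intros s Hs Hrs.
    assert (Hx1 : x1 s ^ 2 <= coercivity_radius).
    { pose proof (pow2_ge_0 (x2 s)). pose proof (pow2_ge_0 (x3 s - m)).
      unfold dist2 in Hrs. lra. }
    pose proof (lyap_lower_bound _ (x2 s) (x3 s) Hx1) as Hlow.
    rewrite Hrs, lyap_conserved in Hlow by lra. lra.
Qed.

End Trajectory.

Lemma e3_nonlinear_stable : nonlinear_stable b1 b2 b3 (pt 0 0 m).
Proof.
  intros U [eps HU]. pose proof (cond_pos eps) as Heps.
  pose proof coercivity_pos as Hc0. pose proof coercivity_radius_pos as Hcr.
  assert (HK : 1 <= lyap_bound).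
  { pose proof kappa_pos. pose proof lambda_pos. pose proof (Rabs_pos (b2 / b3)).
    pose proof (pow2_ge_0 b1). pose proof (pow2_ge_0 b3). unfold lyap_bound. nra. }
  set (r := Rmin (Rmin 1 (eps ^ 2)) coercivity_radius).
  assert (Hr : 0 < r) by (apply Rmin_pos; [apply Rmin_pos; [lra | now apply pow_lt] | lra]).
  assert (Hr1 : r <= 1) by (unfold r; eapply Rle_trans; apply Rmin_l).
  assert (Hreps : r <= eps ^ 2) by (unfold r; eapply Rle_trans; [apply Rmin_l | apply Rmin_r]).
  set (eta := Rmin 1 (Rmin r (coercivity * r / lyap_bound) / 3)).
  assert (Heta : 0 < eta).
  { apply Rmin_pos; [lra |]. apply Rdiv_lt_0_compat; [| lra].
    apply Rmin_pos; [lra |]. apply Rdiv_lt_0_compat; nra. }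
  assert (Heta3 : 3 * eta ^ 2 <= Rmin r (coercivity * r / lyap_bound)).
  { assert (eta <= 1) by apply Rmin_l.
    assert (eta <= Rmin r (coercivity * r / lyap_bound) / 3) by apply Rmin_r.
    nra. }
  pose proof (Rmin_l r (coercivity * r / lyap_bound)).
  pose proof (Rmin_r r (coercivity * r / lyap_bound)).
  exists (ball (pt 0 0 m) eta). split; [now exists (mkposreal eta Heta) |].
  intros a c x1 x2 x3 [Ha _] Hsol Hball t Ht.
  pose proof (ball_dist2 _ _ _ _ Hball) as Hd0.
  assert (Hl0 : lyap (x1 0) (x2 0) (x3 0) < coercivity * r).
  { eapply Rle_lt_trans; [apply lyap_upper_bound; lra |].
    apply (Rmult_lt_reg_r (/ lyap_bound)); [apply Rinv_0_lt_compat; lra |].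
    replace (lyap_bound * dist2 (x1 0) (x2 0) (x3 0) * / lyap_bound)
      with (dist2 (x1 0) (x2 0) (x3 0)) by (field; lra).
    lra. }
  apply HU, dist2_ball; [exact Heps |].
  apply (Rlt_le_trans _ r); [| exact Hreps].
  apply (dist2_stays_below a c); [exact Ha | exact Hsol | exact Ht | apply Rmin_r | lra | exact Hl0].
Qed.

End CasimirEnergy.

Theorem proposition4p4 (b1 b2 b3 m : R) :
  b1 * b2 * b3 <> 0 -> m <> 0 -> m * b1 * b2 < 0 ->
  nonlinear_stable b1 b2 b3 (pt 0 0 m).
Proof.
  intros Hb _ Hmb.
  apply e3_nonlinear_stable; [intros -> | intros -> | exact Hmb]; apply Hb; ring.
Qed.
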